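(* $\mathtt{normal}$-$\mathtt{pred}$-$\mathtt{dio}$-$\mathtt{ESO}$-$\mathtt{HORN}\subseteq\mathtt{RealTime_{IA}}$: for every normalized predecessor Horn formula with diagonal input-output $\Phi$ there is an iterative array accepting in real time exactly the words $w\in\Sigma^+$ with $\langle w\rangle\models\Phi$.
   Context: Fix a finite alphabet $\Sigma$. A nonempty word $w=w_1\cdots w_n$ is represented by the structure $\langle w\rangle=([1,n];(Q_s)_{s\in\Sigma},\mathtt{min},\mathtt{max},\mathtt{suc},\mathtt{pred})$ with $Q_s(i)\iff w_i=s$, $\mathtt{min}(i)\iff i=1$, $\mathtt{max}(i)\iff i=n$, $\mathtt{suc}(i)=\min(i+1,n)$, $\mathtt{pred}(i)=\max(i-1,1)$; $x-1=\mathtt{pred}(x)$. A normalized predecessor Horn formula with diagonal input-output is $\Phi=\exists\mathbf{R}\forall x\forall y\,\psi(x,y)$, with $\mathbf{R}$ a finite set of binary relation symbols and $\psi$ a conjunction of clauses each of one of the forms: input clauses $x=y\wedge\mathtt{min}(x)\wedge Q_s(x)\to R(x,y)$ or $x=y\wedge\neg\mathtt{min}(x)\wedge Q_s(x)\to R(x,y)$ ($s\in\Sigma$, $R\in\mathbf{R}$); the contradiction clause $\mathtt{max}(x)\wedge\mathtt{max}(y)\wedge R_\bot(x,y)\to\bot$ for a fixed $R_\bot\in\mathbf{R}$; computation clauses $\delta_1\wedge\cdots\wedge\delta_r\to R(x,y)$, $R\in\mathbf{R}$, each $\delta_i$ a conjunction $S(x-1,y)\wedge\neg\mathtt{min}(x)$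 or $S(x,y-1)\wedge\neg\mathtt{min}(y)$, $S\in\mathbf{R}$. $\mathtt{normal}$-$\mathtt{pred}$-$\mathtt{dio}$-$\mathtt{ESO}$-$\mathtt{HORN}$ is the class of languages $\{w\in\Sigma^+:\langle w\rangle\models\Phi\}$ for such $\Phi$. An iterative array is a cellular automaton with finite state set $Q\supseteq\Sigma$, accepting states $Q_{accept}\subseteq Q$, neighborhood $\{-1,0,1\}$, transition function $\delta:Q^3\to Q$ and an input transition function $\delta_{input}$ for the first cell. On input $w=w_1\cdots w_n$ it uses cells $1,\dots,n$; cells outside are permanently in a state $\sharp$, cells not yet reached by information are in a quiescent state $\lambda$. The letter $w_i$ is given to cell 1 at time $i$ (state of cell 1 at time $i\le n$ computed by $\delta_{input}$ from $w_i$ and the previous neighbourhood states); other updates are $\langle c,t\rangle=\delta(\langle c-1,t-1\rangle,\langle c,t-1\rangle,\langle c+1,t-1\rangle)$. The array accepts $w$ in real time iff $\langle 1,n\rangle\in Q_{accept}$; $\mathtt{RealTime_{IA}}$ is the class of languages so accepted. *)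

From mathcomp Require Import all_boot.
Set Implicit Arguments.
Unset Strict Implicit.
Unset Printing Implicit Defensive.

(* Words: a word over Sigma is a seq Sigma; positions are 1-based.     *)

Definition wpred (i : nat) : nat := maxn i.-1 1.

(* An atom delta_i of a computation clause:
     (true,  S)  stands for  S(x-1,y) /\ ~min(x)
     (false, S)  stands for  S(x,y-1) /\ ~min(y)                       *)
Definition catom (Rs : finType) := (bool * Rs)%type.

Record horn_formula (Sigma Rs : finType) := HornFormula {
  (* input clauses (b, s, R):
       b = true :  x = y /\ min(x) /\ Q_s(x) -> R(x,y)
       b = false:  x = y /\ ~min(x) /\ Q_s(x) -> R(x,y)               *)
  input_clauses : seq (bool * Sigma * Rs);
  (* the contradiction clause max(x) /\ max(y) /\ R_bot(x,y) -> False,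
     for the fixed symbol R_bot (None = clause absent)                  *)
  contra_clause : option Rs;
  (* computation clauses (R, [:: d_1; ...; d_r]) :
       d_1 /\ ... /\ d_r -> R(x,y)                                      *)
  comp_clauses : seq (Rs * seq (catom Rs));
}.

Section HornSem.
Variables (Sigma Rs : finType).

Definition catom_holds (I : Rs -> nat -> nat -> Prop) (x y : nat)
    (d : catom Rs) : Prop :=
  if d.1 then I d.2 (wpred x) y /\ x <> 1
  else I d.2 x (wpred y) /\ y <> 1.

Definition horn_holds (phi : horn_formula Sigma Rs) (w : seq Sigma) (a : Sigma)
    (I : Rs -> nat -> nat -> Prop) : Prop :=
  let n := size w in
  forall x y : nat, 1 <= x <= n -> 1 <= y <= n ->
    (forall b s R, (b, s, R) \in input_clauses phi ->
        x = y -> (if b then x = 1 else x <> 1) -> nth a w x.-1 = s ->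
        I R x y)
 /\ (forall Rb, contra_clause phi = Some Rb ->
        x = n -> y = n -> I Rb x y -> False)
 /\ (forall R ds, (R, ds) \in comp_clauses phi ->
        (forall d, d \in ds -> catom_holds I x y d) -> I R x y).

Definition horn_models (phi : horn_formula Sigma Rs) (w : seq Sigma) : Prop :=
  match w with
  | [::] => False
  | a :: _ => exists I : Rs -> nat -> nat -> Prop, horn_holds phi w a I
  end.

End HornSem.

Record iterative_array (Sigma : finType) := IterativeArray {
  ia_Q : finType;
  ia_embed : Sigma -> ia_Q;
  ia_embed_inj : injective ia_embed;
  ia_accept : pred ia_Q;
  ia_quiescent : ia_Q;
  ia_border : ia_Q;
  ia_delta : ia_Q -> ia_Q -> ia_Q -> ia_Q;
  ia_delta_input : Sigma -> ia_Q -> ia_Q -> ia_Q -> ia_Q;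
      (* input transition of cell 1: letter and previous neighbourhood *)
  ia_quiescentP : ia_delta ia_quiescent ia_quiescent ia_quiescent = ia_quiescent;
}.

Arguments ia_Q {Sigma} _.
Arguments ia_accept {Sigma} _.
Arguments ia_quiescent {Sigma} _.
Arguments ia_border {Sigma} _.
Arguments ia_delta {Sigma} _.
Arguments ia_delta_input {Sigma} _.

Section IASem.
Variables (Sigma : finType) (A : iterative_array Sigma).

(* ia_conf w a t c = <c,t>, the state of cell c at time t on input w
   (a = default letter, irrelevant for positions inside w).      *)
Fixpoint ia_conf (w : seq Sigma) (a : Sigma) (t : nat) : nat -> ia_Q A :=
  let n := size w in
  match t with
  | 0 => fun c => if (1 <= c <= n) then ia_quiescent A else ia_border A
  | t'.+1 => fun c =>
      if ~~ (1 <= c <= n) then ia_border A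
      else if (c == 1) && (t'.+1 <= n) then
        ia_delta_input A (nth a w t') (ia_conf w a t' 0)
                         (ia_conf w a t' 1) (ia_conf w a t' 2)
      else ia_delta A (ia_conf w a t' c.-1) (ia_conf w a t' c)
                      (ia_conf w a t' c.+1)
  end.

Definition ia_accepts_realtime (w : seq Sigma) : Prop :=
  match w with
  | [::] => False
  | a :: _ => ia_accept A (ia_conf w a (size w) 1)
  end.

End IASem.

From mathcomp Require Import all_boot zify.

Set Implicit Arguments.
Unset Strict Implicit.
Unset Printing Implicit Defensive.

(* The formula is satisfiable on <w> iff its least model M avoids R_bot at
   (n, n), and M obeys the recursion
     M(x, y) = input(x, y) \cup fire(M(x-1, y), M(x, y-1)),
   with M empty on row and column 0.  The array evaluates this recursion
   along anti-diagonals: at time t, cell c+1 holds M at (x, y+1), (y+1, x)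
   and (x, y) for x = t-c, y = t+c.  The next window of a cell is computed
   from its own window and those of its two neighbours, and cell 1 reads
   the letter w_x needed for the diagonal entry M(x, x); at time n cell 1
   holds M(n, n). *)

Section HornIA.
Variables (Sigma Rs : finType) (phi : horn_formula Sigma Rs).
Local Notation rels := {set Rs}.

Definition atom_ok (X Y : rels) (d : catom Rs) : bool :=
  d.2 \in (if d.1 then X else Y).

Definition fire (X Y : rels) : rels :=
  [set R | has (fun p => (p.1 == R) && all (atom_ok X Y) p.2) (comp_clauses phi)].

Definition input_set (first : bool) (s : Sigma) : rels :=
  [set R | (first, s, R) \in input_clauses phi].

Definition contradicted (D : rels) : bool :=
  if contra_clause phi is Some Rb then Rb \in D else false.

Lemma fireP X Y R :
  reflect (exists2 ds, (R, ds) \in comp_clauses phi & all (atom_ok X Y) ds)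
          (R \in fire X Y).
Proof.
rewrite inE; apply: (iffP hasP) => [[[R' ds] hin /andP[/eqP/= <- hall]]|[ds hin hall]].
  by exists ds.
by exists (R, ds); rewrite //= eqxx.
Qed.

Section LeastModel.
Variables (w : seq Sigma) (a : Sigma).
Local Notation n := (size w).

Definition diag_input (x y : nat) : rels :=
  if x == y then input_set (x == 1) (nth a w x.-1) else set0.

Fixpoint least_model (x : nat) : nat -> rels :=
  if x is x'.+1 then
    fix least_model_row (y : nat) : rels :=
      if y is y'.+1 then
        diag_input x y :|: fire (least_model x' y) (least_model_row y')
      else set0
  else fun=> set0.

Local Notation M := least_model.

Lemma least_model0 y : M 0 y = set0.
Proof. by []. Qed.

Lemma least_model_0 x : M x 0 = set0.
Proof. by case: x. Qed.

Lemma least_modelE x y : 0 < x -> 0 < y ->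
  M x y = diag_input x y :|: fire (M x.-1 y) (M x y.-1).
Proof. by case: x => // x; case: y. Qed.

Lemma least_model_fire x y : 0 < x -> 0 < y -> x != y ->
  M x y = fire (M x.-1 y) (M x y.-1).
Proof. by move=> x0 y0 xy; rewrite least_modelE // /diag_input ifN // set0U. Qed.

Lemma wpredE x : 1 < x -> wpred x = x.-1.
Proof. by rewrite /wpred; lia. Qed.

Lemma least_model_sub I : horn_holds phi w a I ->
  forall x y, 1 <= x <= n -> 1 <= y <= n -> forall R, R \in M x y -> I R x y.
Proof.
move=> HI x y; have [k] := ubnP (x + y).
elim: k x y => // k IH x y /ltnSE hk hx hy R.
have [Hin [_ Hcomp]] := HI x y hx hy.
rewrite least_modelE ?in_setU; [|lia|lia].
case/orP=> [|/fireP[ds hR hall]].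
  rewrite /diag_input; case: eqP => [exy|_]; last by rewrite inE.
  by rewrite inE => hR; apply: Hin hR exy _ _ => //; case: eqP.
apply: (Hcomp R ds hR) => -[[] S] /(allP hall); rewrite /atom_ok /catom_holds /= => hS.
  have x1 : x != 1 by apply: contraTneq hS => ->; rewrite least_model0 inE.
  by rewrite wpredE; [split; [apply: IH hS; lia | exact/eqP] | lia].
have y1 : y != 1 by apply: contraTneq hS => ->; rewrite least_model_0 inE.
by rewrite wpredE; [split; [apply: IH hS; lia | exact/eqP] | lia].
Qed.

Lemma least_model_holds : ~~ contradicted (M n n) ->
  horn_holds phi w a (fun R x y => R \in M x y).
Proof.
move=> ncontra; rewrite /horn_holds /= => x y hx hy; split; [|split].
- move=> b s R hR <- hb hs; rewrite least_modelE ?in_setU; [|lia|lia].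
  rewrite /diag_input eqxx inE hs.
  suff -> : (x == 1) = b by rewrite hR.
  by case: (b) hb => [->|/eqP/negbTE].
- by move=> Rb hRb -> -> hin; move: ncontra; rewrite /contradicted hRb hin.
- move=> R ds hR hds; rewrite least_modelE ?in_setU; [|lia|lia].
  apply/orP; right; apply/fireP; exists ds => //.
  apply/allP => -[[] S] /hds; rewrite /catom_holds /atom_ok /= => -[hS h1].
    by rewrite -wpredE //; lia.
  by rewrite -wpredE //; lia.
Qed.

End LeastModel.

Arguments least_model : simpl never.

Lemma horn_modelsE a w :
  horn_models phi (a :: w) <->
  ~~ contradicted (least_model (a :: w) a (size w).+1 (size w).+1).
Proof.
split=> [[I HI]|/least_model_holds HM].
  apply/negP; rewrite /contradicted; case hRb: (contra_clause phi) => [Rb|] // hin.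
  have hn : 1 <= (size w).+1 <= size (a :: w) by rewrite /= leqnn.
  have [_ [Hcontra _]] := HI _ _ hn hn.
  by apply: Hcontra hRb erefl erefl _; apply: least_model_sub hin.
by exists (fun R x y => R \in least_model (a :: w) a x y).
Qed.

Definition window := (rels * rels * rels)%type.
Definition window0 : window := (set0, set0, set0).
Definition win_up (s : window) : rels := s.1.1.
Definition win_low (s : window) : rels := s.1.2.
Definition win_mid (s : window) : rels := s.2.

(* [up] is M(x-1, y+1) and [low] is M(y+1, x-1); both are empty when the
   cell's own previous window [S] is inactive, i.e. on row x = 1. *)
Definition extend (S R : option window) (mid mid' : rels) : window :=
  let s := odflt window0 S in
  let r := odflt window0 R in
  let up := if S is Some _ then fire (win_up r) (win_up s) else set0 in
  let low := if S is Some _ then fire (win_low s) (win_low r) else set0 in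
  (fire up mid, fire mid' low, mid).

Definition ia_step (L S R : option window) : option window :=
  if L is Some l then
    let s := odflt window0 S in
    Some (extend S R (fire (win_up s) (win_up l)) (fire (win_low l) (win_low s)))
  else None.

Definition ia_input_step (c : Sigma) (S R : option window) : option window :=
  let s := odflt window0 S in
  let mid := input_set (S == None) c :|: fire (win_up s) (win_low s) in
  Some (extend S R mid mid).

Definition decode (q : option window + Sigma) : option window :=
  if q is inl s then s else None.

Definition ia_accepting (q : option window + Sigma) : bool :=
  if decode q is Some s then ~~ contradicted (win_mid s) else false.

Definition horn_ia : iterative_array Sigma :=
  @IterativeArray Sigma (option window + Sigma)%type inr inr_inj
    ia_accepting (inl None) (inl None)
    (fun l s r => inl (ia_step (decode l) (decode s) (decode r)))
    (fun c _ s r => inl (ia_input_step c (decode s) (decode r))) erefl.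

Section Run.
Variables (w : seq Sigma) (a : Sigma).
Local Notation n := (size w).
Local Notation M := (least_model w a).

Definition window_at (x y : nat) : window := (M x y.+1, M y.+1 x, M x y).

Definition cell_state (x y : nat) : option window :=
  if x is 0 then None else Some (window_at x y).

Lemma odflt_cell_state x y : odflt window0 (cell_state x y) = window_at x y.
Proof. by case: x => //; rewrite /window_at least_model_0. Qed.

Lemma extend_window_at x z : 0 < x <= z ->
  extend (cell_state x.-1 z.-1) (cell_state x.-2 z) (M x z) (M z x) = window_at x z.
Proof.
case/andP=> x0 xz; have z0 : 0 < z := leq_trans x0 xz.
rewrite /extend !odflt_cell_state /window_at /win_up /win_low /= (prednK z0).
rewrite [M x z.+1]least_model_fire ?[M z.+1 x]least_model_fire //; try lia.
congr (fire _ _, fire _ _, _) => /=; case: x x0 xz => [|[|x]] //= _ xz.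
  by rewrite [RHS]least_model_fire //; lia.
by rewrite [RHS]least_model_fire //; lia.
Qed.

Lemma ia_step_cell_state x y : x < y.+2 ->
  ia_step (cell_state x y) (cell_state x.-1 y.+1) (cell_state x.-2 y.+2) =
  cell_state x y.+2.
Proof.
case: x => // x xy; rewrite [RHS]/cell_state -extend_window_at; last lia.
rewrite /ia_step odflt_cell_state /window_at /win_up /win_low /=.
by congr (Some (extend _ _ _ _)); rewrite [RHS]least_model_fire //; lia.
Qed.

Lemma ia_input_step_cell_state x : 0 < x ->
  ia_input_step (nth a w x.-1) (cell_state x.-1 x.-1) (cell_state x.-2 x) =
  cell_state x x.
Proof.
case: x => // x _; rewrite /ia_input_step odflt_cell_state.
have -> : input_set (cell_state x x == None) (nth a w x)
          :|: fire (win_up (window_at x x)) (win_low (window_at x x)) = M x.+1 x.+1.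
  by rewrite least_modelE // /diag_input eqxx; case: x.
by congr Some; apply: (extend_window_at (x := x.+1)); lia.
Qed.

Lemma decode_ia_conf t c : t <= n ->
  decode (ia_conf horn_ia w a t c.+1) = cell_state (t - c) (t + c).
Proof.
elim: t c => [|t IH] c ht /=; first by case: ifP.
case: ifPn => [cn|_]; first by rewrite (_ : t.+1 - c = 0) //; lia.
have IHt c' := IH c' (ltnW ht).
case: c => [|c] /=.
  rewrite ht !IHt !subn0 subn1 !addn0 addn1.
  exact: (ia_input_step_cell_state (x := t.+1)).
rewrite !IHt subSS addSn !addnS !subnS.
by apply: ia_step_cell_state; lia.
Qed.

End Run.

End HornIA.

Theorem lemma6 (Sigma Rs : finType) (phi : horn_formula Sigma Rs) :
  exists A : iterative_array Sigma,
    forall w : seq Sigma, ia_accepts_realtime A w <-> horn_models phi w.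
Proof.
exists (horn_ia phi) => -[|a w]; first by split.
rewrite horn_modelsE /ia_accepts_realtime /= /ia_accepting.
by rewrite (decode_ia_conf phi a 0 (leqnn (size (a :: w)))) subn0 addn0.
Qed.
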